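(* Let $d,r$ be non-negative integers. If a matroid $M$ has a $(d,r)$-decomposition, then $M$ has a rooted $(d,r)$-decomposition.
   Context: For a matroid $M$ with rank function $r_M$ and disjoint sets $X,Y$ of elements, $\lambda_M(X,Y)=r_M(X)+r_M(Y)-r_M(X\cup Y)$. For pairwise disjoint sets $X_1,\dots,X_k$ of elements, $\lambda^*_M(X_1,\dots,X_k)=\max_{I\subseteq[k]}\lambda_M\big(\bigcup_{i\in I}X_i,\bigcup_{i\in[k]\setminus I}X_i\big)$. A $(d,r)$-decomposition of a matroid $M$ is a tree $T$ of radius $d$ whose leaves are in one-to-one correspondence with the elements of $M$, such that for every inner (non-leaf) vertex $v$ of $T$ with $k$ neighbours, if $X_1,\dots,X_k$ are the sets of elements of $M$ assigned to the leaves of the $k$ components of $T\setminus v$, then $\lambda^*_M(X_1,\dots,X_k)\le r$. A rooted $(d,r)$-decomposition of $M$ is a rooted tree $T$ of depth $d$ (the depth being the maximum number of edges on a path from the root to a leaf) whose leaves are in one-to-one correspondence with the elements of $M$, such that for every inner vertex $v$ of $T$ with $k$ children, if $X_1,\dots,X_k$ are the sets of elements of $M$ assigned to the leaves of the $k$ subtrees rooted at the children of $v$, then $\lambda^*_M(X_1,\dots,X_k)\le r$. *)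

From mathcomp Require Import all_boot.
Set Implicit Arguments. Unset Strict Implicit. Unset Printing Implicit Defensive.

Record matroid (E : finType) := Matroid {
  rank : {set E} -> nat;
  rank_card : forall X : {set E}, rank X <= #|X|;
  rank_mono : forall X Y : {set E}, X \subset Y -> rank X <= rank Y;
  rank_submod : forall X Y : {set E},
      rank (X :|: Y) + rank (X :&: Y) <= rank X + rank Y }.

(* lambda_M(X,Y) = r(X) + r(Y) - r(X u Y)  (never truncated, by submodularity) *)
Definition lam (E : finType) (M : matroid E) (X Y : {set E}) : nat :=
  rank M X + rank M Y - rank M (X :|: Y).

Definition lamstar (E : finType) (M : matroid E) (K : finType) (A : {set K})
    (X : K -> {set E}) : nat :=
  \max_(I : {set K} | I \subset A)
     lam M (\bigcup_(i in I) X i) (\bigcup_(i in A :\: I) X i).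

Section Trees.
Variables (V : finType) (e : rel V).

Definition has_cycle : Prop :=
  exists (x : V) (p : seq V),
    [/\ uniq (x :: p), 2 <= size p, path e x p & e (last x p) x].

Definition is_tree : Prop :=
  [/\ 0 < #|V|, symmetric e, irreflexive e,
      (forall x y : V, connect e x y) & ~ has_cycle].

(* a leaf is a vertex of degree at most one (degree 0 only for the
   one-vertex tree) *)
Definition leaf (v : V) : bool := #|[set u | e v u]| <= 1.

Definition within (x y : V) (n : nat) : Prop :=
  exists p : seq V, [/\ path e x p, last x p = y & size p <= n].

Definition radius_eq (d : nat) : Prop :=
  (exists c : V, forall y : V, within c y d) /\
  (forall (n : nat) (c : V), n < d -> exists y : V, ~ within c y n).

Definition depth_eq (rt : V) (d : nat) : Prop :=
  (forall y : V, leaf y -> within rt y d) /\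
  (exists y : V, leaf y /\ forall n : nat, n < d -> ~ within rt y n).

Definition nbhd (v : V) : {set V} := [set u | e v u].

Definition comp (v u w : V) : bool :=
  connect [rel a b | [&& e a b, a != v & b != v]] u w.

Definition children (rt v : V) : {set V} :=
  [set u | e v u & ~~ comp v u rt].

End Trees.

Definition elts (E V : finType) (e : rel V) (f : E -> V) (v u : V) : {set E} :=
  [set x | comp e v u (f x)].

Definition leaf_bij (E V : finType) (e : rel V) (f : E -> V) : Prop :=
  injective f /\ (forall v : V, leaf e v <-> exists x : E, f x = v).

Definition has_decomposition (E : finType) (M : matroid E) (d r : nat) : Prop :=
  exists (V : finType) (e : rel V) (f : E -> V),
    [/\ is_tree e, radius_eq e d, leaf_bij e f &
        forall v : V, ~~ leaf e v ->
          lamstar M (nbhd e v) (elts e f v) <= r].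

Definition has_rooted_decomposition (E : finType) (M : matroid E) (d r : nat)
    : Prop :=
  exists (V : finType) (e : rel V) (rt : V) (f : E -> V),
    [/\ is_tree e, depth_eq e rt d, leaf_bij e f &
        forall v : V, ~~ leaf e v ->
          lamstar M (children e rt v) (elts e f v) <= r].

From mathcomp Require Import all_boot zify.
Set Implicit Arguments. Unset Strict Implicit. Unset Printing Implicit Defensive.

(* Root the tree at a centre c.  Children of a vertex are among its
   neighbours, and lambda* only grows with the family, so the width bound
   survives.  Every leaf is within d of c; for the depth to be exactly d we
   need a leaf at distance d.  A vertex y at distance d is one: each neighbour
   of y is reached from c by a walk of length at most d, which cannot pass
   through y (it would reach y sooner), and two distinct neighbours joined
   away from y would close a cycle through y. *)

Lemma lamS (E : finType) (M : matroid E) (X Y Y' : {set E}) :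
  Y \subset Y' -> lam M X Y <= lam M X Y'.
Proof.
move=> sYY'; rewrite /lam.
have submod := rank_submod M Y' (X :|: Y).
have unionE : Y' :|: (X :|: Y) = X :|: Y'.
  by apply/setP=> z; rewrite !inE; case: (boolP (z \in Y)) => [/(subsetP sYY') ->|_];
     rewrite ?orbT // orbF orbC.
rewrite unionE in submod.
have rankY : rank M Y <= rank M (Y' :&: (X :|: Y)).
  by apply: rank_mono; rewrite subsetI sYY' subsetUr.
have := rank_submod M X Y.
lia.
Qed.

Lemma lamstarS (E : finType) (M : matroid E) (K : finType) (A B : {set K})
    (X : K -> {set E}) : A \subset B -> lamstar M A X <= lamstar M B X.
Proof.
move=> sAB; apply/bigmax_leqP=> I sIA.
apply: leq_trans (leq_bigmax_cond _ (subset_trans sIA sAB)).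
apply: lamS; apply/bigcupsP=> i hi; apply: bigcup_sup.
exact: subsetP (setSD I sAB) i hi.
Qed.

Section Walks.
Variables (V : finType) (e : rel V).

Definition avoid (y : V) : rel V := [rel a b | [&& e a b, a != y & b != y]].

Lemma within_leq (x y : V) (m n : nat) : m <= n -> within e x y m -> within e x y n.
Proof. by move=> lemn [p [px py pm]]; exists p; split=> //; apply: leq_trans lemn. Qed.

Lemma path_to_mem_shorter (y : V) (p : seq V) (x : V) :
  path e x p -> y \in x :: p -> last x p != y ->
  exists2 q, path e x q & last x q = y /\ size q < size p.
Proof.
elim: p x => [|z p IH] x /=; first by move=> _; rewrite inE => /eqP -> /eqP.
move=> /andP[exz pz]; rewrite inE; case: (eqVneq y x) => [-> _ _|_ /= hy hl].
  by exists [::].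
have [q qz [qy qp]] := IH z pz hy hl.
by exists (z :: q); rewrite /= ?exz.
Qed.

Lemma path_avoid (y : V) (p : seq V) (x : V) :
  path e x p -> y \notin x :: p -> path (avoid y) x p.
Proof.
rewrite /avoid; elim: p x => [|z p IH] x //= /andP[exz pz].
rewrite !inE !negb_or => /and3P[nyx nyz nyp].
by rewrite exz eq_sym nyx eq_sym nyz IH // inE negb_or nyz.
Qed.

Lemma path_avoid_notin (y : V) (p : seq V) (x : V) :
  path (avoid y) x p -> x != y -> y \notin x :: p.
Proof.
rewrite /avoid; elim: p x => [|z p IH] x /=; first by rewrite inE eq_sym.
by move=> /andP[/and3P[_ nx nz] pz] _; rewrite inE negb_or eq_sym nx IH.
Qed.

Hypotheses (sym_e : symmetric e) (irr_e : irreflexive e).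

Lemma neighbour_comp_center (c y z : V) (d : nat) :
  ~ within e c y d -> within e c z d.+1 -> e y z -> comp e y c z.
Proof.
move=> far [p [cp pz psize]] eyz.
have nzy : z != y by apply/eqP=> zy; move: eyz; rewrite zy irr_e.
have ynotin : y \notin c :: p.
  apply/negP=> yin; have py : last c p != y by rewrite pz.
  have [q cq [qy qsize]] := path_to_mem_shorter cp yin py.
  by apply: far; exists q; split=> //; rewrite -ltnS; apply: leq_trans psize.
by apply/connectP; exists p; [apply: path_avoid | rewrite pz].
Qed.

Lemma acyclic_neighbours_apart (y u w : V) :
  ~ has_cycle e -> e y u -> e y w -> u != w -> ~~ comp e y u w.
Proof.
move=> acyclic eyu eyw nuw; apply/negP=> /connectP[p up pw].
case: (shortenP up) pw => q uq uniq_q _ qw.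
have nuy : u != y by apply/eqP=> uy; move: eyu; rewrite uy irr_e.
apply: acyclic; exists y, (u :: q); split.
- by rewrite cons_uniq path_avoid_notin.
- by case: q {uq uniq_q} qw => [/= uw|]; first by rewrite uw eqxx in nuw.
- by rewrite /= eyu (sub_path _ uq) // => a b /and3P[].
- by rewrite /= -qw sym_e.
Qed.

End Walks.

Lemma center_leaf_radius0 (V : finType) (e : rel V) (c : V) :
  irreflexive e -> (forall y, within e c y 0) -> leaf e c.
Proof.
move=> irr_e c_all; rewrite /leaf; suff -> : [set u | e c u] = set0 by rewrite cards0.
apply/setP=> u; rewrite !inE.
have [p [_ pu psize]] := c_all u.
by case: p pu psize => // <- _; rewrite irr_e.
Qed.

Lemma far_vertex_leaf (V : finType) (e : rel V) (c y : V) (d : nat) :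
  is_tree e -> (forall z, within e c z d.+1) -> ~ within e c y d -> leaf e y.
Proof.
move=> [_ sym_e irr_e _ acyclic] c_all far; apply/card_le1_eqP=> w u.
rewrite !inE => eyw eyu; apply/eqP/negPn/negP => nuw.
have cu := neighbour_comp_center irr_e far (c_all u) eyu.
have cw := neighbour_comp_center irr_e far (c_all w) eyw.
have sym_avoid : connect_sym (avoid e y).
  by apply: sym_connect_sym => a b; rewrite /avoid /= sym_e (andbC (a != y)).
have uw : comp e y u w by apply: connect_trans cw; rewrite sym_avoid.
by move: uw; apply/negP; apply: acyclic_neighbours_apart.
Qed.

Lemma center_depth (V : finType) (e : rel V) (c : V) (d : nat) :
  is_tree e -> (forall y, within e c y d) ->
  (forall n c, n < d -> exists y, ~ within e c y n) -> depth_eq e c d.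
Proof.
move=> tree c_all ecc; split=> [y _|]; first exact: c_all.
case: d c_all ecc => [|d] c_all ecc.
  by exists c; split=> //; apply: center_leaf_radius0 c_all; case: tree.
have [y far] := ecc d c (ltnSn d).
exists y; split; first exact: far_vertex_leaf far.
by move=> n ltnd; apply: contra_not far; apply: within_leq.
Qed.

Theorem proposition2p1 (E : finType) (M : matroid E) (d r : nat) :
  has_decomposition M d r -> has_rooted_decomposition M d r.
Proof.
move=> [V [e [f [tree [[c c_all] ecc] bij width]]]].
exists V, e, c, f; split=> //; first exact: center_depth.
move=> v nleaf; apply: leq_trans (width v nleaf); apply: lamstarS.
by apply/subsetP=> u; rewrite !inE => /andP[].
Qed.
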